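(* Let $(\mathfrak{g}_0,[\cdot,\cdot]_0,\langle\cdot,\cdot\rangle_0)$ be a Euclidean Lie algebra, let $\mu\in\mathbb{R}$, $b\in\mathfrak{g}_0$, and let $K,D:\mathfrak{g}_0\to\mathfrak{g}_0$ be endomorphisms with $K$ skew-symmetric, such that the double extension $\mathfrak{g}=\mathbb{R}e\oplus\mathfrak{g}_0\oplus\mathbb{R}\bar e$ with parameters $(K,D,\mu,b)$ (described in the context) is a Lie algebra. Then the Lorentzian Lie algebra $(\mathfrak{g},\langle\cdot,\cdot\rangle)$ is Einstein if and only if $\mathfrak{g}$ is Ricci-flat, $(\mathfrak{g}_0,\langle\cdot,\cdot\rangle_0)$ is Ricci-flat, and for all $u\in\mathfrak{g}_0$: $$4\,\mathrm{tr}(\mathrm{ad}^0_b)+4\mu\,\mathrm{tr}(D)-2\,\mathrm{tr}(D^2)-2\,\mathrm{tr}(DD^* )-\mathrm{tr}(K^2)=0,$$ $$\mathrm{tr}(J^0_u\circ K)+2\,\mathrm{tr}\big((D+D^* )\circ\mathrm{ad}^0_u\big)+2\,\mathrm{tr}(\mathrm{ad}_{D^*(u)})-2\,\mathrm{tr}(\mathrm{ad}_{K(u)})=0.$$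
   Context: Double extension: $\mathfrak{g}=\mathbb{R}e\oplus\mathfrak{g}_0\oplus\mathbb{R}\bar e$ with Lorentzian form $\langle e,e\rangle=\langle\bar e,\bar e\rangle=0$, $\langle e,\bar e\rangle=1$, $\mathfrak{g}_0\perp\{e,\bar e\}$, $\langle\cdot,\cdot\rangle|_{\mathfrak{g}_0}=\langle\cdot,\cdot\rangle_0$, and skew-symmetric bracket $[\bar e,e]=\mu e$, $[\bar e,u]=D(u)+\langle b,u\rangle_0e$, $[u,v]=[u,v]_0+\langle K(u),v\rangle_0e$, $[e,u]=0$ for $u,v\in\mathfrak{g}_0$. Here $\mathrm{ad}^0$ is the adjoint representation of $\mathfrak{g}_0$, $\mathrm{ad}$ that of $\mathfrak{g}$, adjoints $^*$ are with respect to $\langle\cdot,\cdot\rangle_0$, and $J^0_u(v)=(\mathrm{ad}^0_v)^*(u)$. The Levi-Civita product $\mathrm{L}$ of a metric Lie algebra is given by $2\langle \mathrm{L}_uv,w\rangle=\langle[u,v],w\rangle+\langle[w,u],v\rangle+\langle[w,v],u\rangle$, curvature $K(u,v)=\mathrm{L}_{[u,v]}-[\mathrm{L}_u,\mathrm{L}_v]$, Ricci operator $\langle\mathrm{Ric}(u),v\rangle=\mathrm{tr}(w\mapsto K(u,w)v)$; Einstein means $\mathrm{Ric}=\lambda\mathrm{Id}$ for some $\lambda\in\mathbb{R}$, Ricci-flat means $\mathrm{Ric}=0$. *)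

From HB Require Import structures.
From mathcomp Require Import all_boot all_order all_algebra.
From mathcomp Require Import reals.
Set Implicit Arguments. Unset Strict Implicit. Unset Printing Implicit Defensive.
Import Order.TTheory GRing.Theory Num.Theory.
Local Open Scope ring_scope.

Section Generic.
Variable R : realType.

(* vectors of a metric Lie algebra of dimension N are column vectors 'cV_N;
   the (possibly indefinite) scalar product is given by its Gram matrix G. *)
Definition ip N (G : 'M[R]_N) (u v : 'cV[R]_N) : R := (u^T *m G *m v) 0 0.

Definition ebase N (k : 'I_N) : 'cV[R]_N := delta_mx k 0.

Definition is_lie N (br : 'cV[R]_N -> 'cV_N -> 'cV_N) : Prop :=
  [/\ (forall a x y z, br (a *: x + y) z = a *: br x z + br y z),
      (forall a x y z, br z (a *: x + y) = a *: br z x + br z y),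
      (forall x y, br x y = - br y x) &
      (forall x y z, br x (br y z) + br y (br z x) + br z (br x y) = 0)].

Definition adm N (br : 'cV[R]_N -> 'cV_N -> 'cV_N) (u : 'cV_N) : 'M[R]_N :=
  \matrix_(i, j) (br u (ebase j)) i 0.

(* adjoint of an endomorphism A w.r.t. the scalar product with Gram matrix G:
   <A u, v> = <u, A^* v> *)
Definition adjoint N (G : 'M[R]_N) (A : 'M[R]_N) : 'M[R]_N :=
  invmx G *m A^T *m G.

(* Levi-Civita product: the unique L_u v with
   2 <L_u v, w> = <[u,v],w> + <[w,u],v> + <[w,v],u>  for all w *)
Definition LC N (br : 'cV[R]_N -> 'cV_N -> 'cV_N) (G : 'M[R]_N) (u v : 'cV_N)
  : 'cV[R]_N :=
  invmx G *m \col_k (2^-1 * (ip G (br u v) (ebase k) + ip G (br (ebase k) u) v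
                             + ip G (br (ebase k) v) u)).

Definition curv N br (G : 'M[R]_N) (u v w : 'cV[R]_N) : 'cV[R]_N :=
  LC br G (br u v) w - (LC br G u (LC br G v w) - LC br G v (LC br G u w)).

Definition ricform N br (G : 'M[R]_N) (u v : 'cV[R]_N) : R :=
  \tr (\matrix_(i, j) (curv br G u (ebase j) v) i 0).

Definition Ric N br (G : 'M[R]_N) (u : 'cV[R]_N) : 'cV[R]_N :=
  invmx G *m \col_k ricform br G u (ebase k).

Definition einstein N br (G : 'M[R]_N) : Prop :=
  exists lambda : R, forall u, Ric br G u = lambda *: u.

Definition ricci_flat N br (G : 'M[R]_N) : Prop := forall u, Ric br G u = 0.

Definition euclidean n (G0 : 'M[R]_n) : Prop :=
  G0^T = G0 /\ forall u : 'cV[R]_n, u != 0 -> 0 < ip G0 u u.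

Definition Jm n br0 (G0 : 'M[R]_n) (u : 'cV[R]_n) : 'M[R]_n :=
  \matrix_(i, j) (adjoint G0 (adm br0 (ebase j)) *m u) i 0.

(* an element a e + u + c ebar is the column vector col_mx (col_mx a u) c *)
Definition mkg n (a : R) (u : 'cV[R]_n) (c : R) : 'cV[R]_(1 + n + 1) :=
  col_mx (col_mx a%:M u) c%:M.
Definition ecoord n (x : 'cV[R]_(1 + n + 1)) : R := usubmx (usubmx x) 0 0.
Definition g0part n (x : 'cV[R]_(1 + n + 1)) : 'cV[R]_n := dsubmx (usubmx x).
Definition ebcoord n (x : 'cV[R]_(1 + n + 1)) : R := dsubmx x 0 0.

Definition dext_ip n (G0 : 'M[R]_n) (x y : 'cV[R]_(1 + n + 1)) : R :=
  ecoord x * ebcoord y + ebcoord x * ecoord y + ip G0 (g0part x) (g0part y).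
Definition dext_G n (G0 : 'M[R]_n) : 'M[R]_(1 + n + 1) :=
  \matrix_(i, j) dext_ip G0 (ebase i) (ebase j).

(* bracket, the bilinear skew extension of
   [ebar,e] = mu e, [ebar,u] = D u + <b,u>_0 e, [u,v] = [u,v]_0 + <K u, v>_0 e,
   [e,u] = 0, [e,e] = [ebar,ebar] = 0 *)
Definition dext_br n (br0 : 'cV[R]_n -> 'cV_n -> 'cV_n) (G0 : 'M[R]_n)
  (K D : 'M[R]_n) (mu : R) (b : 'cV[R]_n) (x y : 'cV[R]_(1 + n + 1))
  : 'cV[R]_(1 + n + 1) :=
  let a := ecoord x in let u := g0part x in let c := ebcoord x in
  let a' := ecoord y in let v := g0part y in let c' := ebcoord y in
  mkg (mu * (c * a' - a * c') + c * ip G0 b v - c' * ip G0 b u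
         + ip G0 (K *m u) v)
      (c *: (D *m v) - c' *: (D *m u) + br0 u v)
      0.

End Generic.

From HB Require Import structures.
From mathcomp Require Import all_boot all_order all_algebra.
From mathcomp Require Import reals ring lra.
Set Implicit Arguments. Unset Strict Implicit. Unset Printing Implicit Defensive.
Import Order.TTheory GRing.Theory Num.Theory.
Local Open Scope ring_scope.

(* If g is Einstein then Ric(e) = lambda e; but K(e, .) = 0 in a double
   extension, so Ric(e) = 0, lambda = 0 and g is Ricci-flat.  The Ricci form of
   g restricted to g0 is that of g0, so g0 is Ricci-flat, hence unimodular: for
   the vector H with <H, v> = tr ad_v one finds ric(H, H) = -1/4 tr (S^* S) with
   S = ad_H + ad_H^*, so S = 0 and <H, H> = tr ad_H = tr S / 2 = 0.  The two
   trace identities are ric(ebar, ebar) = 0 and ric(u, ebar) = 0, computed from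
   the Levi-Civita product of g, whose mixed part is governed by
   P = (D + D^* + K) / 2; unimodularity kills the traces of ad. *)

Section LinearFunctions.
Variables (R : pzRingType) (U : lmodType R) (V : zmodType).
Variables (s : GRing.Scale.law R V) (f : U -> V).
Hypothesis fL : linear_for s f.

Lemma linear_funD x y : f (x + y) = f x + f y.
Proof. exact: (GRing.semilinear_linear fL).2. Qed.

Lemma linear_funZ a x : f (a *: x) = s a (f x).
Proof. exact: (GRing.semilinear_linear fL).1. Qed.

Lemma linear_fun0 : f 0 = 0.
Proof. by apply: (addrI (f 0)); rewrite -linear_funD !addr0. Qed.

Lemma linear_funN x : f (- x) = - f x.
Proof. by apply: (addrI (f x)); rewrite -linear_funD !subrr linear_fun0. Qed.

End LinearFunctions.

(* Rewriting with linearB would leave a generic linear map that mxtraceZ no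
   longer matches. *)
Lemma mxtraceB (R : pzRingType) n (A B : 'M[R]_n) : \tr (A - B) = \tr A - \tr B.
Proof. exact: linearB. Qed.

Lemma mxtraceN (R : pzRingType) n (A : 'M[R]_n) : \tr (- A) = - \tr A.
Proof. exact: linearN. Qed.

Section Coordinates.
Variables (R : realType) (N : nat).
Implicit Types (A B G : 'M[R]_N) (u v w x y z : 'cV[R]_N).

Lemma mulmx_ebase m (A : 'M[R]_(m, N)) k i j : (A *m ebase R k) i j = A i k.
Proof. by rewrite /ebase -colE !mxE. Qed.

Lemma trmx_ebase_mulmx m (A : 'M[R]_(N, m)) k j : ((ebase R k)^T *m A) 0 j = A k j.
Proof. by rewrite -{1}[A]trmxK -trmx_mul mxE mulmx_ebase mxE. Qed.

Lemma cV_ebase_sum v : v = \sum_j v j 0 *: ebase R j.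
Proof.
rewrite {1}(matrix_sum_delta v); apply: eq_bigr => j _.
by rewrite big_ord1.
Qed.

Lemma mulmx_extP A B : (forall x, A *m x = B *m x) -> A = B.
Proof.
by move=> eqAB; apply/matrixP => i j; rewrite -(mulmx_ebase A j i 0) eqAB mulmx_ebase.
Qed.

Definition fun_mx (f : 'cV[R]_N -> 'cV[R]_N) : 'M[R]_N :=
  \matrix_(i, j) f (ebase R j) i 0.

Lemma fun_mxE f : linear f -> forall v, fun_mx f *m v = f v.
Proof.
move=> fL v; rewrite [in RHS](cV_ebase_sum v).
rewrite (big_morph f (linear_funD fL) (linear_fun0 fL)).
apply/colP => i; rewrite summxE !mxE; apply: eq_bigr => j _.
by rewrite (linear_funZ fL) /= !mxE mulrC.
Qed.

Lemma fun_mx_eq f A : (forall w, f w = A *m w) -> fun_mx f = A.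
Proof. by move=> fA; apply/matrixP => i j; rewrite mxE fA mulmx_ebase. Qed.

Lemma mxtrace_fun_mx f : \tr (fun_mx f) = \sum_k f (ebase R k) k 0.
Proof. by apply: eq_bigr => k _; rewrite mxE. Qed.

Lemma cV_entryD a (P Q : 'cV[R]_N) k : (a *: P + Q) k 0 = a * P k 0 + Q k 0.
Proof. by rewrite !mxE. Qed.

Lemma scalar_ebase_sum (f : 'cV[R]_N -> R) :
  scalar f -> forall v, f v = \sum_j v j 0 * f (ebase R j).
Proof.
move=> fL v; rewrite {1}(cV_ebase_sum v).
rewrite (big_morph f (linear_funD fL) (linear_fun0 fL)).
by apply: eq_bigr => j _; rewrite (linear_funZ fL).
Qed.

Lemma ip_scalarl G z : scalar (ip G ^~ z).
Proof. by move=> a x y; rewrite /ip linearD linearZ /= !mulmxDl -!scalemxAl !mxE. Qed.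

Lemma ip_scalarr G z : scalar (ip G z).
Proof. by move=> a x y; rewrite /ip mulmxDr -scalemxAr !mxE. Qed.

Lemma ip0l G x : ip G 0 x = 0.
Proof. by rewrite /ip trmx0 !mul0mx mxE. Qed.
Lemma ip0r G x : ip G x 0 = 0.
Proof. by rewrite /ip mulmx0 mxE. Qed.
Lemma ipDl G x y z : ip G (x + y) z = ip G x z + ip G y z.
Proof. by have := ip_scalarl G z 1 x y; rewrite /= scale1r mul1r. Qed.
Lemma ipDr G x y z : ip G z (x + y) = ip G z x + ip G z y.
Proof. by have := ip_scalarr G z 1 x y; rewrite /= scale1r mul1r. Qed.
Lemma ipZl G a x z : ip G (a *: x) z = a * ip G x z.
Proof. by have := ip_scalarl G z a x 0; rewrite /= !addr0 ip0l addr0. Qed.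
Lemma ipZr G a x z : ip G z (a *: x) = a * ip G z x.
Proof. by have := ip_scalarr G z a x 0; rewrite /= !addr0 ip0r addr0. Qed.
Lemma ipNl G x z : ip G (- x) z = - ip G x z.
Proof. by rewrite -scaleN1r ipZl mulN1r. Qed.
Lemma ipNr G x z : ip G z (- x) = - ip G z x.
Proof. by rewrite -scaleN1r ipZr mulN1r. Qed.
Lemma ipBl G x y z : ip G (x - y) z = ip G x z - ip G y z.
Proof. by rewrite ipDl ipNl. Qed.

Lemma ip_ebase G i j : ip G (ebase R i) (ebase R j) = G i j.
Proof. by rewrite /ip mulmx_ebase trmx_ebase_mulmx. Qed.

Lemma ipC G x y : G^T = G -> ip G x y = ip G y x.
Proof.
move=> sG; rewrite /ip; transitivity ((y^T *m G *m x)^T 0 0); last by rewrite mxE.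
by rewrite !trmx_mul !trmxK sG mulmxA.
Qed.

Lemma ip_invmx G c w : G^T = G -> G \in unitmx ->
  ip G (invmx G *m c) w = \sum_k c k 0 * w k 0.
Proof.
move=> sG uG; rewrite /ip trmx_mul trmx_inv sG -(mulmxA c^T) mulVmx // mulmx1.
by rewrite !mxE; apply: eq_bigr => k _; rewrite !mxE.
Qed.

Lemma ip_inj G x y : G \in unitmx -> (forall w, ip G x w = ip G y w) -> x = y.
Proof.
move=> uG eqxy; have eqxyG : x^T *m G = y^T *m G.
  apply/rowP => k; have := eqxy (ebase R k); rewrite /ip !mulmx_ebase => ->.
  by rewrite !mxE; apply: eq_bigr => j _; rewrite !mxE.
by apply: trmx_inj; rewrite -(mulmxK uG x^T) eqxyG mulmxK.
Qed.

Lemma mx_eq_ip G A B : G \in unitmx ->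
  (forall x y, ip G (A *m x) y = ip G (B *m x) y) -> A = B.
Proof. by move=> uG eqAB; apply: mulmx_extP => x; apply: (ip_inj uG) => y; apply: eqAB. Qed.

End Coordinates.

Section Adjoint.
Variables (R : realType) (N : nat) (G : 'M[R]_N).
Hypothesis sG : G^T = G.
Hypothesis uG : G \in unitmx.
Implicit Types (A B S X : 'M[R]_N) (x y : 'cV[R]_N).
Local Notation adj := (adjoint G).

Lemma adjointP A x y : ip G (adj A *m x) y = ip G x (A *m y).
Proof.
rewrite /adjoint /ip !trmx_mul trmx_inv sG trmxK !mulmxA.
by rewrite -[x^T *m G *m A *m invmx G *m G]mulmxA mulVmx // mulmx1.
Qed.

Lemma adjointK A : adj (adj A) = A.
Proof. by apply: (mx_eq_ip uG) => x y; rewrite adjointP ipC // adjointP ipC. Qed.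

Lemma adjointM A B : adj (A *m B) = adj B *m adj A.
Proof.
apply: (mx_eq_ip uG) => x y.
by rewrite adjointP -[adj B *m adj A *m x]mulmxA !adjointP mulmxA.
Qed.

Lemma adjointD A B : adj (A + B) = adj A + adj B.
Proof. by rewrite /adjoint linearD /= mulmxDr mulmxDl. Qed.

Lemma adjointZ a A : adj (a *: A) = a *: adj A.
Proof. by rewrite /adjoint linearZ /= -scalemxAr -scalemxAl. Qed.

Lemma adjointN A : adj (- A) = - adj A.
Proof. by rewrite -scaleN1r adjointZ scaleN1r. Qed.

Lemma adjointB A B : adj (A - B) = adj A - adj B.
Proof. by rewrite adjointD adjointN. Qed.

Lemma mxtrace_adjoint A : \tr (adj A) = \tr A.
Proof. by rewrite /adjoint mxtrace_mulC mulmxA mulmxV // mul1mx mxtrace_tr. Qed.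

Lemma adjoint_skewP A :
  (forall x y, ip G (A *m x) y = - ip G x (A *m y)) -> adj A = - A.
Proof.
by move=> skewA; apply: (mx_eq_ip uG) => x y; rewrite adjointP mulNmx ipNl skewA opprK.
Qed.

Lemma mxtrace_skew_selfadj X S : adj X = - X -> adj S = S -> \tr (X *m S) = 0.
Proof.
move=> skewX selfS; have trN : \tr (X *m S) = - \tr (X *m S).
  by rewrite -{1}mxtrace_adjoint adjointM skewX selfS mulmxN linearN /= mxtrace_mulC.
have : \tr (X *m S) *+ 2 == 0 by rewrite mulr2n {2}trN subrr.
by rewrite mulrn_eq0 /= => /eqP.
Qed.

Lemma mxtrace_skew X : adj X = - X -> \tr X = 0.
Proof.
move=> skewX; rewrite -[X]mulmx1 mxtrace_skew_selfadj //.
by rewrite /adjoint trmx1 mulmx1 mulVmx.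
Qed.

End Adjoint.

Section MetricLieAlgebra.
Variables (R : realType) (N : nat).
Variable br : 'cV[R]_N -> 'cV[R]_N -> 'cV[R]_N.
Variable G : 'M[R]_N.
Hypothesis brl : forall a x y z, br (a *: x + y) z = a *: br x z + br y z.
Hypothesis brr : forall a x y z, br z (a *: x + y) = a *: br z x + br z y.
Hypothesis bra : forall x y, br x y = - br y x.
Hypothesis sG : G^T = G.
Hypothesis uG : G \in unitmx.
Implicit Types (A B S X : 'M[R]_N) (u v w x y z p : 'cV[R]_N).

Local Notation adj := (adjoint G).
Local Notation ad := (adm br).
Local Notation "<< x , y >>" := (ip G x y).

Lemma br_linearl y : linear (br^~ y).
Proof. by move=> a u v; rewrite brl. Qed.

Lemma br_linearr x : linear (br x).
Proof. by move=> a u v; rewrite brr. Qed.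

Lemma ip_LC u v w :
  << LC br G u v, w >> = 2^-1 * (<< br u v, w >> + << br w u, v >> + << br w v, u >>).
Proof.
rewrite /LC ip_invmx //.
pose koszul z := << br u v, z >> + << br z u, v >> + << br z v, u >>.
have koszulL : scalar koszul by move=> a x y; rewrite /koszul ipDr ipZr !brl !ipDl !ipZl; ring.
rewrite -/(koszul w) (scalar_ebase_sum koszulL w) mulr_sumr.
by apply: eq_bigr => k _; rewrite mxE /koszul; ring.
Qed.

Lemma LC_eq u v z :
  (forall w, << z, w >> = 2^-1 * (<< br u v, w >> + << br w u, v >> + << br w v, u >>)) ->
  LC br G u v = z.
Proof. by move=> zP; apply: (ip_inj uG) => w; rewrite ip_LC zP. Qed.

Lemma LC_linearl v : linear (LC br G ^~ v).
Proof.
move=> a u u'; apply: LC_eq => w.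
rewrite ipDl ipZl !ip_LC brl brr !ipDl !ipZl ipDr ipZr; ring.
Qed.

Lemma LC_linearr u : linear (LC br G u).
Proof.
move=> a v v'; apply: LC_eq => w.
rewrite ipDl ipZl !ip_LC !brr !ipDl !ipZl ipDr ipZr; ring.
Qed.

Lemma LC0l v : LC br G 0 v = 0.
Proof. exact: (linear_fun0 (LC_linearl v)). Qed.

Lemma LC0r u : LC br G u 0 = 0.
Proof. exact: (linear_fun0 (LC_linearr u)). Qed.

Lemma LCNr u v : LC br G u (- v) = - LC br G u v.
Proof. exact: (linear_funN (LC_linearr u)). Qed.

Lemma LCNl u v : LC br G (- u) v = - LC br G u v.
Proof. exact: (linear_funN (LC_linearl v)). Qed.


Lemma curv_mx u v w :
  curv br G u v w =
  (fun_mx (LC br G (br u v))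
   - (fun_mx (LC br G u) *m fun_mx (LC br G v)
      - fun_mx (LC br G v) *m fun_mx (LC br G u))) *m w.
Proof. by rewrite !mulmxBl -!mulmxA !(fun_mxE (LC_linearr _)). Qed.

Lemma curv_linear u v : linear (curv br G u v).
Proof. by move=> a x y; rewrite !curv_mx mulmxDr scalemxAr. Qed.

Lemma curv_skew u v w : curv br G u v w = - curv br G v u w.
Proof.
rewrite !curv_mx [br u v]bra -[RHS]mulNmx; congr (_ *m _).
rewrite (_ : fun_mx (LC br G (- br v u)) = - fun_mx (LC br G (br v u))).
  by rewrite [in LHS]opprB [in RHS]opprD [in RHS]opprK.
by apply: mulmx_extP => x; rewrite mulNmx !(fun_mxE (LC_linearr _)) LCNl.
Qed.

Lemma ricform_sum x y : ricform br G x y = \sum_k curv br G x (ebase R k) y k 0.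
Proof. exact: (mxtrace_fun_mx (fun w => curv br G x w y)). Qed.

Lemma ricform_scalar x : scalar (ricform br G x).
Proof.
move=> a y z; rewrite !ricform_sum mulr_sumr -big_split; apply: eq_bigr => k _.
by rewrite (linear_funD (curv_linear _ _)) (linear_funZ (curv_linear _ _)) cV_entryD.
Qed.

Lemma RicP x : Ric br G x = 0 <-> forall y, ricform br G x y = 0.
Proof.
split=> [Ric0 y | ric0]; last first.
  rewrite /Ric (_ : \col__ _ = 0) ?mulmx0 //.
  by apply/colP => k; rewrite !mxE ric0.
rewrite (scalar_ebase_sum (ricform_scalar x)) big1 // => k _.
have /colP/(_ k) : \col_k ricform br G x (ebase R k) = 0.
  by move: Ric0; rewrite /Ric => Ric0; rewrite -[LHS](mulKVmx uG) Ric0 mulmx0.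
by rewrite !mxE => ->; rewrite mulr0.
Qed.

Lemma admE u w : ad u *m w = br u w.
Proof. exact: fun_mxE (br_linearr u) w. Qed.

Lemma adm_linear a u v : ad (a *: u + v) = a *: ad u + ad v.
Proof. by apply: mulmx_extP => x; rewrite mulmxDl -scalemxAl !admE brl. Qed.

Lemma JmE u w : Jm br G u *m w = adj (ad w) *m u.
Proof.
apply: (fun_mxE (f := fun w => adj (ad w) *m u)) => a x y.
by rewrite adm_linear adjointD adjointZ mulmxDl -scalemxAl.
Qed.

Lemma Jm_skew u : adj (Jm br G u) = - Jm br G u.
Proof.
apply: (mx_eq_ip uG) => x y.
by rewrite adjointP // mulNmx ipNl !JmE ipC // !adjointP // !admE bra ipNr.
Qed.

(* Lmx u is the matrix of L_u and Rmx v that of p |-> L_p v; they are locked so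
   that generic matrix rewrites do not unfold them. *)
Fact Lmx_key : unit. Proof. by []. Qed.
Definition Lmx u := locked_with Lmx_key (2^-1 *: (ad u - adj (ad u) - Jm br G u)).
Lemma LmxE u : Lmx u = 2^-1 *: (ad u - adj (ad u) - Jm br G u).
Proof. exact: locked_withE. Qed.

Fact Rmx_key : unit. Proof. by []. Qed.
Definition Rmx v := locked_with Rmx_key (Lmx v - ad v).
Lemma RmxE v : Rmx v = Lmx v - ad v.
Proof. exact: locked_withE. Qed.

Lemma LC_Lmx u w : LC br G u w = Lmx u *m w.
Proof.
apply: LC_eq => z.
rewrite LmxE -scalemxAl ipZl !mulmxBl !ipBl admE adjointP // JmE adjointP // admE.
by rewrite [<< w, _ >>]ipC // [<< u, _ >>]ipC // !admE [br u z]bra [br w z]bra !ipNl; ring.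
Qed.

Lemma LC_Rmx p y : LC br G p y = Rmx y *m p.
Proof.
have torsion_free : LC br G p y - LC br G y p = br p y.
  by apply: (ip_inj uG) => w; rewrite ipBl !ip_LC [br y p]bra ipNl; lra.
by rewrite RmxE mulmxBl admE -LC_Lmx [br y p]bra opprK -torsion_free addrC subrK.
Qed.

Lemma Lmx_skew u : adj (Lmx u) = - Lmx u.
Proof.
rewrite LmxE adjointZ !adjointB adjointK // Jm_skew -scalerN.
by rewrite opprD opprB.
Qed.

Lemma mxtrace_Lmx u : \tr (Lmx u) = 0.
Proof. exact/(mxtrace_skew sG uG)/Lmx_skew. Qed.

Lemma mxtrace_Rmx v : \tr (Rmx v) = - \tr (ad v).
Proof. by rewrite RmxE mxtraceB mxtrace_Lmx sub0r. Qed.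

(* K(x, w) y = L_[x,w] y - L_x L_w y + L_w L_x y, and L_p q = R_q p. *)
Lemma ricformE x y :
  ricform br G x y = \tr (Rmx y *m ad x - Lmx x *m Rmx y + Rmx (Lmx x *m y)).
Proof.
have curvE w : curv br G x w y = (Rmx y *m ad x - Lmx x *m Rmx y + Rmx (Lmx x *m y)) *m w.
  rewrite /curv LC_Rmx (LC_Lmx x (LC br G w y)) (LC_Rmx w y) (LC_Rmx w (LC br G x y)) LC_Lmx.
  rewrite [in RHS]mulmxDl [in RHS]mulmxBl -!mulmxA admE.
  by rewrite opprD opprK addrA.
by rewrite -(fun_mx_eq curvE).
Qed.

End MetricLieAlgebra.

Section EuclideanForms.
Variable R : realType.

Lemma euclidean_unit n (G : 'M[R]_n) : euclidean G -> G \in unitmx.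
Proof.
case=> _ posG; rewrite -row_free_unit; apply: inj_row_free => v vG0.
apply/eqP; apply: contraT => v_neq0.
have : v^T != 0 by apply: contra v_neq0 => /eqP vT0; rewrite -[v]trmxK vT0 trmx0.
by move/posG; rewrite /ip trmxK vG0 mul0mx mxE ltxx.
Qed.

Lemma euclidean_congr n (G P : 'M[R]_n) :
  euclidean G -> P \in unitmx -> euclidean (P^T *m G *m P).
Proof.
case=> symG posG unitP; split; first by rewrite !trmx_mul trmxK symG mulmxA.
move=> v v_neq0; have Pv_neq0 : P *m v != 0.
  by apply: contra v_neq0 => /eqP Pv0; rewrite -[v](mulKmx unitP) Pv0 mulmx0.
by have := posG _ Pv_neq0; rewrite /ip trmx_mul !mulmxA.
Qed.

Lemma ip_col_mx m n (G : 'M[R]_(m + n)) (x : 'cV[R]_m) (v : 'cV[R]_n) :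
  ip G (col_mx x v) (col_mx x v) =
  (x^T *m ulsubmx G *m x + x^T *m ursubmx G *m v
   + v^T *m dlsubmx G *m x + v^T *m drsubmx G *m v) 0 0.
Proof.
rewrite /ip -{1}(submxK G) tr_col_mx mul_row_block mul_row_col !mulmxDl.
by rewrite addrACA !addrA.
Qed.

Lemma euclidean_drsubmx m n (G : 'M[R]_(m + n)) : euclidean G -> euclidean (drsubmx G).
Proof.
case=> symG posG; split; first by rewrite trmx_drsub symG.
move=> v v_neq0; have : col_mx (0 : 'cV[R]_m) v != 0.
  by rewrite col_mx_eq0 negb_and v_neq0 orbT.
by move/posG; rewrite ip_col_mx trmx0 !mul0mx !mulmx0 !add0r.
Qed.

Lemma euclidean_ulsubmx_gt0 n (G : 'M[R]_(1 + n)) : euclidean G -> 0 < ulsubmx G 0 0.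
Proof.
case=> _ posG; have : col_mx (1%:M : 'cV[R]_1) (0 : 'cV[R]_n) != 0.
  by rewrite col_mx_eq0 negb_and oner_eq0.
move/posG; rewrite ip_col_mx trmx0 !mul0mx !mulmx0 !addr0 trmx1 mul1mx mulmx1.
by rewrite [ulsubmx G]mx11_scalar !mxE eqxx mulr1n.
Qed.

Lemma block_pivot n (G : 'M[R]_(1 + n)) (a := ulsubmx G 0 0) (r := ursubmx G) :
  G^T = G -> a != 0 ->
  let P := block_mx 1%:M (- a^-1 *: r) 0 1%:M in
  P^T *m G *m P = block_mx a%:M 0 0 (drsubmx G - a^-1 *: (r^T *m r)).
Proof.
move=> symG a_neq0 P.
have -> : G = block_mx a%:M r r^T (drsubmx G).
  by rewrite /r trmx_ursub symG /a -mx11_scalar submxK.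
rewrite /P tr_block_mx !trmx1 trmx0 !mulmx_block.
rewrite !(mul1mx, mulmx1, mul0mx, mulmx0, addr0, add0r).
have pivot_r : a%:M *m (- a^-1 *: r) + r = 0.
  by rewrite mul_scalar_mx scalerA mulrN mulfV // scaleN1r addNr.
have pivot_rT : (- a^-1 *: r)^T *m a%:M + r^T = 0.
  by rewrite mul_mx_scalar linearZ /= scalerA mulrN mulfV // scaleN1r addNr.
rewrite ?trmx1 ?mul1mx pivot_r pivot_rT mul0mx add0r linearZ /= -scalemxAl scaleNr.
by rewrite addrC block_mxKdr.
Qed.

Lemma euclidean_congr1 n (G : 'M[R]_n) :
  euclidean G -> exists2 P, P \in unitmx & P^T *m G *m P = 1%:M.
Proof.
elim: n G => [|n IH] G eucG.
  by exists 1%:M; [exact: unitmx1 | apply/matrixP => [] []].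
move: G eucG; rewrite -[n.+1]/(1 + n)%N => G eucG.
have a_gt0 := euclidean_ulsubmx_gt0 eucG.
set a := ulsubmx G 0 0 in a_gt0; set r := ursubmx G.
have a_neq0 : a != 0 by rewrite gt_eqF.
pose P1 := block_mx 1%:M (- a^-1 *: r) 0 1%:M : 'M[R]_(1 + n).
have P1_unit : P1 \in unitmx by rewrite unitmxE det_ublock !det1 mulr1 unitr1.
have G1E := block_pivot eucG.1 a_neq0.
have eucG1 := euclidean_congr eucG P1_unit; rewrite G1E in eucG1.
have [P2 P2_unit G2E] := IH _ (euclidean_drsubmx eucG1).
rewrite block_mxKdr in G2E.
pose s := Num.sqrt a; have s_gt0 : 0 < s by rewrite sqrtr_gt0.
exists (P1 *m block_mx (s^-1)%:M 0 0 P2).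
  rewrite unitmx_mul P1_unit unitmxE det_ublock det_scalar1 unitrM.
  by rewrite unitfE invr_eq0 gt_eqF //= -unitmxE.
rewrite trmx_mul !mulmxA -(mulmxA _ P1^T) -(mulmxA _ (P1^T *m G)).
rewrite -(mulmxA _ (P1^T *m G *m P1)) G1E.
rewrite tr_block_mx !trmx0 tr_scalar_mx !mulmx_block.
rewrite !(mul0mx, mulmx0, addr0, add0r) -!scalar_mxM mulmxA G2E.
have -> : s^-1 * (a / s) = 1.
  have a_ss : a = s * s by rewrite -expr2 sqr_sqrtr // ltW.
  by rewrite a_ss; field; rewrite gt_eqF.
by rewrite -scalar_mx_block.
Qed.

Lemma ip_ge0 n (G : 'M[R]_n) u : euclidean G -> 0 <= ip G u u.
Proof. by case=> _ posG; have [->|/posG/ltW//] := eqVneq u 0; rewrite ip0l. Qed.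

Lemma ip_eq0 n (G : 'M[R]_n) u : euclidean G -> ip G u u = 0 -> u = 0.
Proof.
case=> _ posG uu0; apply/eqP; apply: contraT => /posG.
by rewrite uu0 ltxx.
Qed.

(* In a basis P with P^T G P = 1, tr (S^* S) is the sum of the squared
   lengths of the columns of S P. *)
Lemma adjoint_mxtrace_eq0 n (G S : 'M[R]_n) :
  euclidean G -> \tr (adjoint G S *m S) = 0 -> S = 0.
Proof.
move=> eucG trSS0; have [P P_unit GP] := euclidean_congr1 eucG.
have PT_unit : P^T \in unitmx by rewrite unitmx_tr.
have invG : invmx G = P *m P^T.
  have GPPT : G *m (P *m P^T) = 1%:M.
    by apply: (can_inj (mulKmx PT_unit)); rewrite mulmx1 !mulmxA GP mul1mx.
  by rewrite -[LHS]mulmx1 -GPPT mulKmx // euclidean_unit.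
set Z := S *m P.
have trSSE : \tr (adjoint G S *m S) = \sum_i ip G (Z *m ebase R i) (Z *m ebase R i).
  rewrite /adjoint invG -!mulmxA mxtrace_mulC -!mulmxA.
  apply: eq_bigr => i _.
  by rewrite /ip trmx_mul !mulmxA -trmx_ebase_mulmx /Z trmx_mul !mulmxA mulmx_ebase.
have Z0 : Z = 0.
  apply: mulmx_extP => x; rewrite mul0mx [x]cV_ebase_sum !mulmx_sumr big1 // => i _.
  rewrite -scalemxAr (ip_eq0 (u := Z *m ebase R i) eucG) ?scaler0 //.
  pose F k := ip G (Z *m ebase R k) (Z *m ebase R k).
  apply: (psumr_eq0P (P := xpredT) (F := F)) => //.
    by move=> k _; apply: ip_ge0.
  by rewrite -trSSE.
by rewrite -[S](mulmxK P_unit) -/Z Z0 mul0mx.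
Qed.

End EuclideanForms.

Section Unimodular.
Variables (R : realType) (N : nat).
Variable br : 'cV[R]_N -> 'cV[R]_N -> 'cV[R]_N.
Variable G : 'M[R]_N.
Hypothesis brl : forall a x y z, br (a *: x + y) z = a *: br x z + br y z.
Hypothesis brr : forall a x y z, br z (a *: x + y) = a *: br z x + br z y.
Hypothesis bra : forall x y, br x y = - br y x.
Hypothesis jacobi : forall x y z, br x (br y z) + br y (br z x) + br z (br x y) = 0.
Hypothesis eucG : euclidean G.
Implicit Types (x y z v : 'cV[R]_N).

Let sG : G^T = G := eucG.1.
Let uG : G \in unitmx := euclidean_unit eucG.

Local Notation adj := (adjoint G).
Local Notation ad := (adm br).

Lemma adm_br x y : ad (br x y) = ad x *m ad y - ad y *m ad x.
Proof.
apply: mulmx_extP => z; rewrite mulmxBl -!mulmxA !admE // bra.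
have := jacobi x y z; rewrite [br z x]bra (linear_funN (br_linearr brr y)).
by move/eqP; rewrite addrC addr_eq0 => /eqP ->; rewrite opprK.
Qed.

Lemma mxtrace_adm_br x y : \tr (ad (br x y)) = 0.
Proof. by rewrite adm_br linearB /= mxtrace_mulC subrr. Qed.

Definition mean_curvature := invmx G *m \col_k \tr (ad (ebase R k)).
Local Notation H := mean_curvature.

Lemma ip_mean_curvature v : ip G H v = \tr (ad v).
Proof.
have trL : scalar (fun v => \tr (ad v)) by move=> a x y; rewrite adm_linear // linearD linearZ.
rewrite ip_invmx // (scalar_ebase_sum trL v).
by apply: eq_bigr => k _; rewrite mxE mulrC.
Qed.

Lemma Jm_mean_curvature : Jm br G H = 0.
Proof.
apply: (mx_eq_ip uG) => x y.
by rewrite JmE // adjointP // admE // ip_mean_curvature mxtrace_adm_br mul0mx ip0l.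
Qed.

(* For A = ad H: L_H = (A - A^* ) / 2 because J_H = 0, and R_H = L_H - A. *)
Lemma ricform_mean_curvature :
  ricform br G H H = - 4^-1 * \tr (adj (ad H + adj (ad H)) *m (ad H + adj (ad H))).
Proof.
have trR0 : \tr (Rmx br G (Lmx br G H *m H)) = 0.
  rewrite mxtrace_Rmx // -ip_mean_curvature.
  have : ip G H (Lmx br G H *m H) = - ip G H (Lmx br G H *m H).
    by rewrite -{1}adjointP // Lmx_skew // mulNmx ipNl ipC.
  by move/eqP; rewrite -addr_eq0 -mulr2n mulrn_eq0 /= => /eqP ->; rewrite oppr0.
rewrite ricformE // mxtraceD trR0 addr0 !RmxE LmxE Jm_mean_curvature subr0.
set A := ad H.
have trAA : \tr (adj A *m adj A) = \tr (A *m A) by rewrite -adjointM // mxtrace_adjoint.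
have trAAs : \tr (A *m adj A) = \tr (adj A *m A) by rewrite mxtrace_mulC.
rewrite adjointD // adjointK //.
rewrite !(scalerBr, mulmxDl, mulmxDr, mulmxBl, mulmxBr, mulNmx, mulmxN).
rewrite -!scalemxAl -!scalemxAr !(mxtraceD, mxtraceB, mxtraceN, mxtraceZ) trAA trAAs.
lra.
Qed.

Lemma ricci_flat_unimodular : ricci_flat br G -> forall v, \tr (ad v) = 0.
Proof.
move=> flat; have S0 : adj (ad H) + ad H = 0.
  rewrite addrC; apply: (adjoint_mxtrace_eq0 eucG).
  have := (RicP brl brr sG uG H).1 (flat H) H; rewrite ricform_mean_curvature.
  by move/eqP; rewrite mulf_eq0 oppr_eq0 invr_eq0 pnatr_eq0 /= => /eqP.
have HH0 : ip G H H = 0.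
  move/(congr1 mxtrace): S0; rewrite mxtraceD mxtrace_adjoint // mxtrace0 -mulr2n.
  by rewrite ip_mean_curvature => /eqP; rewrite mulrn_eq0 /= => /eqP.
by move=> v; rewrite -ip_mean_curvature (ip_eq0 eucG HH0) ip0l.
Qed.

End Unimodular.

Section DoubleExtensionCoordinates.
Variables (R : realType) (n : nat).
Local Notation V := 'cV[R]_(1 + n + 1).
Implicit Types (x y : V) (u v : 'cV[R]_n).

Definition e_idx : 'I_(1 + n + 1) := lshift 1 (lshift n ord0).
Definition g0_idx (k : 'I_n) : 'I_(1 + n + 1) := lshift 1 (rshift 1 k).
Definition ebar_idx : 'I_(1 + n + 1) := rshift (1 + n) ord0.

Lemma ecoordE x : ecoord x = x e_idx 0.
Proof. by rewrite /ecoord !mxE. Qed.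
Lemma g0partE x k : g0part x k 0 = x (g0_idx k) 0.
Proof. by rewrite /g0part !mxE. Qed.
Lemma ebcoordE x : ebcoord x = x ebar_idx 0.
Proof. by rewrite /ebcoord !mxE. Qed.

Lemma ecoord_mkg a u c : ecoord (mkg a u c) = a.
Proof. by rewrite /ecoord /mkg !col_mxKu mxE eqxx mulr1n. Qed.
Lemma g0part_mkg a u c : g0part (mkg a u c) = u.
Proof. by rewrite /g0part /mkg col_mxKu col_mxKd. Qed.
Lemma ebcoord_mkg a u c : ebcoord (mkg a u c) = c.
Proof. by rewrite /ebcoord /mkg col_mxKd mxE eqxx mulr1n. Qed.

Lemma mkgK x : mkg (ecoord x) (g0part x) (ebcoord x) = x.
Proof. by rewrite /mkg /ecoord /g0part /ebcoord -!mx11_scalar !vsubmxK. Qed.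

Lemma mkg_eq x a u c :
  ecoord x = a -> g0part x = u -> ebcoord x = c -> x = mkg a u c.
Proof. by move=> <- <- <-; rewrite mkgK. Qed.

Lemma ecoordD p x y : ecoord (p *: x + y) = p * ecoord x + ecoord y.
Proof. by rewrite !ecoordE !mxE. Qed.
Lemma g0partD p x y : g0part (p *: x + y) = p *: g0part x + g0part y.
Proof. by apply/colP => k; rewrite !mxE -!g0partE. Qed.
Lemma ebcoordD p x y : ebcoord (p *: x + y) = p * ebcoord x + ebcoord y.
Proof. by rewrite !ebcoordE !mxE. Qed.
Lemma ecoordZ p x : ecoord (p *: x) = p * ecoord x.
Proof. by rewrite !ecoordE !mxE. Qed.
Lemma ecoordB x y : ecoord (x - y) = ecoord x - ecoord y.
Proof. by rewrite !ecoordE !mxE. Qed.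
Lemma g0partB x y : g0part (x - y) = g0part x - g0part y.
Proof. by apply/colP => k; rewrite !mxE -!g0partE. Qed.
Lemma ebcoordB x y : ebcoord (x - y) = ebcoord x - ebcoord y.
Proof. by rewrite !ebcoordE !mxE. Qed.

Lemma mkg0 : mkg 0 0 0 = 0 :> V.
Proof.
apply/esym/mkg_eq; rewrite ?ecoordE ?ebcoordE ?mxE //.
by apply/colP => k; rewrite g0partE !mxE.
Qed.

Lemma mkgB a u c a' u' c' :
  mkg a u c - mkg a' u' c' = mkg (a - a') (u - u') (c - c') :> V.
Proof.
by apply: mkg_eq; rewrite ?ecoordB ?g0partB ?ebcoordB ?ecoord_mkg ?g0part_mkg ?ebcoord_mkg.
Qed.

Lemma ebase_e_idx : ebase R e_idx = mkg 1 0 0.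
Proof.
apply: mkg_eq.
- by rewrite ecoordE mxE !eqxx.
- apply/colP => k; rewrite g0partE !mxE /g0_idx /e_idx.
  by rewrite (inj_eq (@lshift_inj _ _)) eq_rlshift.
- by rewrite ebcoordE mxE /ebar_idx /e_idx eq_rlshift.
Qed.

Lemma ebase_g0_idx k : ebase R (g0_idx k) = mkg 0 (ebase R k) 0.
Proof.
apply: mkg_eq.
- by rewrite ecoordE mxE /g0_idx /e_idx (inj_eq (@lshift_inj _ _)) eq_lrshift.
- apply/colP => j; rewrite g0partE !mxE /g0_idx (inj_eq (@lshift_inj _ _)).
  by rewrite (inj_eq (@rshift_inj _ _)).
- by rewrite ebcoordE mxE /ebar_idx /g0_idx eq_rlshift.
Qed.

Lemma ebase_ebar_idx : ebase R ebar_idx = mkg 0 0 1.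
Proof.
apply: mkg_eq.
- by rewrite ecoordE mxE /ebar_idx /e_idx eq_lrshift.
- by apply/colP => k; rewrite g0partE !mxE /g0_idx /ebar_idx eq_lrshift.
- by rewrite ebcoordE mxE !eqxx.
Qed.

Lemma mxtrace_dext (F : V -> V) :
  \tr (fun_mx F) =
  ecoord (F (mkg 1 0 0)) + \sum_k g0part (F (mkg 0 (ebase R k) 0)) k 0
  + ebcoord (F (mkg 0 0 1)).
Proof.
rewrite mxtrace_fun_mx big_split_ord big_split_ord !big_ord1.
rewrite ebase_e_idx ebase_ebar_idx ecoordE ebcoordE; congr (_ + _ + _).
by apply: eq_bigr => k _; rewrite ebase_g0_idx g0partE.
Qed.

End DoubleExtensionCoordinates.

Section DoubleExtension.
Variables (R : realType) (n : nat).
Local Notation V := 'cV[R]_(1 + n + 1).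
Variable br0 : 'cV[R]_n -> 'cV[R]_n -> 'cV[R]_n.
Variables (G0 K D : 'M[R]_n) (mu : R) (b : 'cV[R]_n).
Hypothesis brl : forall a x y z, br0 (a *: x + y) z = a *: br0 x z + br0 y z.
Hypothesis brr : forall a x y z, br0 z (a *: x + y) = a *: br0 z x + br0 z y.
Hypothesis bra : forall x y, br0 x y = - br0 y x.
Hypothesis eucG0 : euclidean G0.
Hypothesis Kskew : forall u v : 'cV[R]_n, ip G0 (K *m u) v = - ip G0 u (K *m v).
Local Notation br := (dext_br br0 G0 K D mu b).
Local Notation G := (dext_G G0).
Hypothesis brlg : forall a (x y z : V), br (a *: x + y) z = a *: br x z + br y z.
Hypothesis brrg : forall a (x y z : V), br z (a *: x + y) = a *: br z x + br z y.
Hypothesis brag : forall x y : V, br x y = - br y x.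
Implicit Types (x y z : V) (u v w : 'cV[R]_n).

Let sG0 : G0^T = G0 := eucG0.1.
Let uG0 : G0 \in unitmx := euclidean_unit eucG0.
Local Notation "<< x , y >>" := (ip G0 x y).

Lemma dext_ip_mkg a u c a' v c' :
  dext_ip G0 (mkg a u c) (mkg a' v c') = a * c' + c * a' + << u, v >>.
Proof. by rewrite /dext_ip !ecoord_mkg !g0part_mkg !ebcoord_mkg. Qed.

Lemma dext_br_mkg a u c a' v c' :
  br (mkg a u c) (mkg a' v c') =
  mkg (mu * (c * a' - a * c') + c * << b, v >> - c' * << b, u >> + << K *m u, v >>)
      (c *: (D *m v) - c' *: (D *m u) + br0 u v) 0.
Proof. by rewrite /dext_br /= !ecoord_mkg !g0part_mkg !ebcoord_mkg. Qed.

Lemma dext_ip_scalarl y : scalar (dext_ip G0 ^~ y).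
Proof. by move=> p x z; rewrite /dext_ip ecoordD ebcoordD g0partD ip_scalarl; ring. Qed.

Lemma dext_ip_scalarr x : scalar (dext_ip G0 x).
Proof. by move=> p y z; rewrite /dext_ip ecoordD ebcoordD g0partD ip_scalarr; ring. Qed.

Lemma ip_dext_G x y : ip G x y = dext_ip G0 x y.
Proof.
rewrite (scalar_ebase_sum (ip_scalarr G x) y) (scalar_ebase_sum (dext_ip_scalarr x) y).
apply: eq_bigr => j _; congr (_ * _).
rewrite (scalar_ebase_sum (ip_scalarl G _) x) (scalar_ebase_sum (dext_ip_scalarl _) x).
by apply: eq_bigr => i _; rewrite ip_ebase mxE.
Qed.

Lemma dext_G_sym : G^T = G.
Proof. by apply/matrixP => i j; rewrite !mxE /dext_ip (ipC _ _ sG0); ring. Qed.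

Lemma dext_G_unit : G \in unitmx.
Proof.
rewrite -row_free_unit; apply: inj_row_free => x xG0.
have x_isotropic y : dext_ip G0 x^T y = 0.
  by rewrite -ip_dext_G /ip trmxK xG0 mul0mx mxE.
have := x_isotropic (mkg (ebcoord x^T) (g0part x^T) (ecoord x^T)).
rewrite -{1}(mkgK x^T) dext_ip_mkg.
set a := ecoord x^T; set u := g0part x^T; set c := ebcoord x^T => xx0.
have uu_ge0 := ip_ge0 u eucG0.
have a0 : a = 0 by nra.
have c0 : c = 0 by nra.
have u0 : u = 0 by apply: (ip_eq0 eucG0); nra.
by rewrite -[x]trmxK -(mkgK x^T) -/a -/u -/c a0 u0 c0 mkg0 trmx0.
Qed.

(* The g0-component of L_u ebar is - P u. *)
Fact dext_P_key : unit. Proof. by []. Qed.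
Definition dext_P := locked_with dext_P_key (2^-1 *: (D + adjoint G0 D + K)).
Lemma dext_PE : dext_P = 2^-1 *: (D + adjoint G0 D + K).
Proof. exact: locked_withE. Qed.
Local Notation P := dext_P.

Lemma ip_dext_P u w :
  << P *m u, w >> = 2^-1 * (<< D *m u, w >> + << D *m w, u >> + << K *m u, w >>).
Proof. by rewrite dext_PE -scalemxAl ipZl !mulmxDl !ipDl adjointP // (ipC u (D *m w) sG0). Qed.

Lemma dext_LC_mkg a u c a' v c' :
  LC br G (mkg a u c) (mkg a' v c') =
  mkg (<< P *m u, v >> + mu * c * a' + c * << b, v >>)
      (LC br0 G0 u v - c' *: (P *m u) + c *: (D *m v - P *m v) - (c * c') *: b)
      (- (mu * c * c')).
Proof.
apply: (LC_eq brlg dext_G_sym dext_G_unit) => w.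
rewrite -(mkgK w); move: (ecoord w) (g0part w) (ebcoord w) => a2 w0 c2.
rewrite !ip_dext_G !dext_br_mkg !dext_ip_mkg.
rewrite !(ipDl, ipBl, ipZl, ipNl) !ip_dext_P (ip_LC brl sG0 uG0).
rewrite (Kskew w0 u) (Kskew w0 v) (ipC w0 (K *m u) sG0) (ipC w0 (K *m v) sG0).
by field.
Qed.

Ltac dext_simpl := rewrite ?(scale0r, scaler0, scale1r, mulmx0, mul0mx, add0r, addr0,
  subr0, sub0r, oppr0, mul0r, mulr0, mul1r, mulr1, ip0l, ip0r,
  (linear_fun0 (br_linearl brl _)), (linear_fun0 (br_linearr brr _)),
  (LC0l brl brr sG0 uG0), (LC0r brl brr sG0 uG0)).

Ltac dext_curv :=
  rewrite /curv !dext_br_mkg !dext_LC_mkg; dext_simpl; rewrite ?dext_LC_mkg; dext_simpl;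
  rewrite !mkgB.

Lemma dext_curv_e x y : curv br G (mkg 1 0 0) x y = 0.
Proof.
rewrite -(mkgK x) -(mkgK y).
move: (ecoord x) (g0part x) (ebcoord x) (ecoord y) (g0part y) (ebcoord y) => a u c a' v c'.
by dext_curv; dext_simpl; rewrite mkg0.
Qed.

Lemma ebcoord_dext_curv x y z : ebcoord (curv br G x y z) = 0.
Proof.
rewrite -(mkgK x) -(mkgK y) -(mkgK z).
move: (ecoord x) (g0part x) (ebcoord x) (ecoord y) (g0part y) (ebcoord y) => a u c a' v c'.
move: (ecoord z) (g0part z) (ebcoord z) => a'' w c''.
by dext_curv; rewrite ebcoord_mkg; ring.
Qed.

Lemma dext_ricformE x y :
  ricform br G x y = \sum_k g0part (curv br G x (mkg 0 (ebase R k) 0) y) k 0.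
Proof.
rewrite /ricform (mxtrace_dext (fun z : V => curv br G x z y)) ebcoord_dext_curv addr0.
rewrite (curv_skew brlg brrg brag dext_G_sym dext_G_unit) dext_curv_e oppr0.
by rewrite ecoordE mxE add0r.
Qed.

Lemma g0part_dext_curv u w v :
  g0part (curv br G (mkg 0 u 0) (mkg 0 w 0) (mkg 0 v 0)) = curv br0 G0 u w v.
Proof. by dext_curv; rewrite g0part_mkg. Qed.

Local Notation Lmx0 := (Lmx br0 G0).
Local Notation Rmx0 := (Rmx br0 G0).

Lemma g0part_dext_curv_ebar w :
  g0part (curv br G (mkg 0 0 1) (mkg 0 w 0) (mkg 0 0 1)) =
  - (P *m (D *m w)) + D *m (P *m w) - P *m (P *m w) - Rmx0 b *m w + mu *: (P *m w).
Proof.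
dext_curv; rewrite g0part_mkg !mulmxN (LCNr brl brr sG0 uG0) (LC_Rmx brl brr bra sG0 uG0).
by apply: (ip_inj uG0) => z; rewrite !(ipDl, ipBl, ipNl, ipZl); ring.
Qed.

Lemma g0part_dext_curv_g0_ebar u w :
  g0part (curv br G (mkg 0 u 0) (mkg 0 w 0) (mkg 0 0 1)) =
  - (P *m (adm br0 u *m w)) + Lmx0 u *m (P *m w) - Rmx0 (P *m u) *m w.
Proof.
dext_curv; rewrite g0part_mkg !(LCNr brl brr sG0 uG0).
rewrite (LC_Rmx brl brr bra sG0 uG0 w (P *m u)) (LC_Lmx brl brr bra sG0 uG0 u (P *m w)).
rewrite admE //.
by apply: (ip_inj uG0) => z; rewrite !(ipDl, ipBl, ipNl, ipZl); ring.
Qed.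

Lemma dext_ricform_e y : ricform br G (mkg 1 0 0) y = 0.
Proof.
rewrite dext_ricformE big1 // => k _.
by rewrite dext_curv_e g0partE mxE.
Qed.

Lemma dext_ricform_g0 u v :
  ricform br G (mkg 0 u 0) (mkg 0 v 0) = ricform br0 G0 u v.
Proof.
rewrite dext_ricformE ricform_sum; apply: eq_bigr => k _.
by rewrite g0part_dext_curv.
Qed.

Lemma dext_ricform_ebar :
  ricform br G (mkg 0 0 1) (mkg 0 0 1) = - \tr (P *m P) + mu * \tr P + \tr (adm br0 b).
Proof.
rewrite dext_ricformE.
rewrite -(mxtrace_fun_mx (fun w => g0part (curv br G (mkg 0 0 1) (mkg 0 w 0) (mkg 0 0 1)))).
rewrite (@fun_mx_eq _ _ _ (- (P *m D) + D *m P - P *m P - Rmx0 b + mu *: P)) => [|w].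
  rewrite !(mxtraceD, mxtraceB, mxtraceN, mxtraceZ) mxtrace_mulC.
  by rewrite (mxtrace_Rmx brl brr bra sG0 uG0); ring.
rewrite g0part_dext_curv_ebar [RHS]mulmxDl [in RHS]mulmxBl.
by rewrite !mulmxDl !mulNmx -!mulmxA -scalemxAl.
Qed.

Lemma dext_ricform_g0_ebar u :
  ricform br G (mkg 0 u 0) (mkg 0 0 1) =
  - \tr (P *m adm br0 u) + \tr (Lmx0 u *m P) + \tr (adm br0 (P *m u)).
Proof.
rewrite dext_ricformE.
rewrite -(mxtrace_fun_mx (fun w => g0part (curv br G (mkg 0 u 0) (mkg 0 w 0) (mkg 0 0 1)))).
rewrite (@fun_mx_eq _ _ _ (- (P *m adm br0 u) + Lmx0 u *m P - Rmx0 (P *m u))) => [|w].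
  rewrite !(mxtraceD, mxtraceB, mxtraceN) (mxtrace_Rmx brl brr bra sG0 uG0).
  by rewrite opprK.
by rewrite g0part_dext_curv_g0_ebar [RHS]mulmxBl [in RHS]mulmxDl !mulNmx -!mulmxA.
Qed.

Lemma adjoint_K : adjoint G0 K = - K.
Proof. exact: adjoint_skewP. Qed.

Lemma mxtrace_dext_P : \tr P = \tr D.
Proof.
rewrite dext_PE mxtraceZ !mxtraceD mxtrace_adjoint // (mxtrace_skew sG0 uG0 adjoint_K).
lra.
Qed.

Lemma mxtrace_dext_P2 :
  \tr (P *m P) =
  2^-1 * \tr (D *m D) + 2^-1 * \tr (D *m adjoint G0 D) + 4^-1 * \tr (K *m K).
Proof.
have trDsDs : \tr (adjoint G0 D *m adjoint G0 D) = \tr (D *m D).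
  by rewrite -adjointM // mxtrace_adjoint.
have trDsD : \tr (adjoint G0 D *m D) = \tr (D *m adjoint G0 D) by rewrite mxtrace_mulC.
have trDsK : \tr (adjoint G0 D *m K) = - \tr (D *m K).
  rewrite -{1}(adjointK sG0 uG0 K) -adjointM // mxtrace_adjoint // adjoint_K.
  by rewrite mulNmx mxtraceN mxtrace_mulC.
have trKDs : \tr (K *m adjoint G0 D) = - \tr (D *m K) by rewrite mxtrace_mulC.
have trKD : \tr (K *m D) = \tr (D *m K) by rewrite mxtrace_mulC.
rewrite dext_PE -scalemxAl -scalemxAr !mxtraceZ !mulmxDl !mulmxDr !mxtraceD.
rewrite trDsDs trDsD trDsK trKDs trKD; lra.
Qed.

Lemma mxtrace_Lmx_dext_P u :
  \tr (Lmx0 u *m P) = 2^-1 * \tr (adm br0 u *m K) - 4^-1 * \tr (Jm br0 G0 u *m K).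
Proof.
have Lmx0_skew := Lmx_skew brl brr bra sG0 uG0 u.
have trLS : \tr (Lmx0 u *m (D + adjoint G0 D)) = 0.
  by apply: (mxtrace_skew_selfadj sG0 uG0 Lmx0_skew); rewrite adjointD // adjointK // addrC.
have trAsK : \tr (adjoint G0 (adm br0 u) *m K) = - \tr (adm br0 u *m K).
  rewrite -(mxtrace_adjoint uG0) adjointM // adjointK // adjoint_K.
  by rewrite mulNmx mxtraceN mxtrace_mulC.
rewrite dext_PE -scalemxAr mxtraceZ mulmxDr mxtraceD trLS add0r.
rewrite LmxE -scalemxAl mxtraceZ !mulmxBl !mxtraceB trAsK; lra.
Qed.

Lemma mxtrace_dext_P_adm u :
  \tr (P *m adm br0 u) =
  2^-1 * \tr ((D + adjoint G0 D) *m adm br0 u) + 2^-1 * \tr (adm br0 u *m K).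
Proof. by rewrite dext_PE -scalemxAl mxtraceZ mulmxDl mxtraceD (mxtrace_mulC K); lra. Qed.

Lemma mxtrace_dext_adm v : \tr (adm br (mkg 0 v 0)) = \tr (adm br0 v).
Proof.
rewrite (mxtrace_dext (br (mkg 0 v 0))) (mxtrace_fun_mx (br0 v)).
rewrite !dext_br_mkg ecoord_mkg ebcoord_mkg; dext_simpl.
by apply: eq_bigr => k _; rewrite dext_br_mkg g0part_mkg; dext_simpl.
Qed.

Let RicG x : Ric br G x = 0 <-> forall y, ricform br G x y = 0 :=
  RicP brlg brrg dext_G_sym dext_G_unit x.
Let RicG0 u : Ric br0 G0 u = 0 <-> forall v, ricform br0 G0 u v = 0 :=
  RicP brl brr sG0 uG0 u.

Lemma dext_einstein_ricci_flat : einstein br G -> ricci_flat br G.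
Proof.
case=> lam Ric_lam; have Ric_e : Ric br G (mkg 1 0 0) = 0.
  by apply: (RicG _).2 => y; apply: dext_ricform_e.
have lam0 : lam = 0.
  have := Ric_lam (mkg 1 0 0); rewrite Ric_e => /(congr1 (@ecoord R n)).
  by rewrite ecoordZ ecoord_mkg ecoordE mxE mulr1.
by move=> x; rewrite Ric_lam lam0 scale0r.
Qed.

Lemma dext_ricci_flat_g0 : ricci_flat br G -> ricci_flat br0 G0.
Proof.
move=> flat u; apply: (RicG0 u).2 => v.
by rewrite -dext_ricform_g0; apply: (RicG _).1.
Qed.

Lemma dext_ricci_flat_ebar : ricci_flat br G ->
  4 * \tr (adm br0 b) + 4 * mu * \tr D - 2 * \tr (D *m D)
    - 2 * \tr (D *m adjoint G0 D) - \tr (K *m K) = 0.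
Proof.
move=> flat; have := (RicG (mkg 0 0 1)).1 (flat _) (mkg 0 0 1).
by rewrite dext_ricform_ebar mxtrace_dext_P2 mxtrace_dext_P; lra.
Qed.

Lemma dext_ricci_flat_g0_ebar u :
  ricci_flat br G -> (forall v, \tr (adm br0 v) = 0) ->
  \tr (Jm br0 G0 u *m K) + 2 * \tr ((D + adjoint G0 D) *m adm br0 u)
  + 2 * \tr (adm br (mkg 0 (adjoint G0 D *m u) 0))
  - 2 * \tr (adm br (mkg 0 (K *m u) 0)) = 0.
Proof.
move=> flat unimod; have := (RicG (mkg 0 u 0)).1 (flat _) (mkg 0 0 1).
rewrite dext_ricform_g0_ebar mxtrace_dext_P_adm mxtrace_Lmx_dext_P !mxtrace_dext_adm !unimod.
lra.
Qed.

End DoubleExtension.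

Theorem proposition4p2 (R : realType) (n : nat)
  (br0 : 'cV[R]_n -> 'cV[R]_n -> 'cV[R]_n) (G0 : 'M[R]_n)
  (mu : R) (b : 'cV[R]_n) (K D : 'M[R]_n) :
  is_lie br0 -> euclidean G0 ->
  (forall u v : 'cV[R]_n, ip G0 (K *m u) v = - ip G0 u (K *m v)) ->
  is_lie (dext_br br0 G0 K D mu b) ->
  let br := dext_br br0 G0 K D mu b in
  let G := dext_G G0 in
  einstein br G <->
  [/\ ricci_flat br G, ricci_flat br0 G0,
      4 * \tr (adm br0 b) + 4 * mu * \tr D - 2 * \tr (D *m D)
        - 2 * \tr (D *m adjoint G0 D) - \tr (K *m K) = 0 &
      forall u : 'cV[R]_n,
        \tr (Jm br0 G0 u *m K) + 2 * \tr ((D + adjoint G0 D) *m adm br0 u)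
        + 2 * \tr (adm br (mkg 0 (adjoint G0 D *m u) 0))
        - 2 * \tr (adm br (mkg 0 (K *m u) 0)) = 0].
Proof.
move=> [brl brr bra jacobi] eucG0 Kskew [brlg brrg brag _] br G.
split=> [einstein_g | [flat _ _ _]]; last by exists 0 => x; rewrite flat scale0r.
have flat : ricci_flat br G by exact: dext_einstein_ricci_flat.
have flat0 : ricci_flat br0 G0 by exact: dext_ricci_flat_g0.
have unimod := ricci_flat_unimodular brl brr bra jacobi eucG0 flat0.
split=> //; first exact: dext_ricci_flat_ebar.
by move=> u; exact: dext_ricci_flat_g0_ebar.
Qed.
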